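(* Let $P>0$ and let $H_1\ge H_2\ge 0$ with $H_1>0$. For $\alpha\in[0,1]$ put $$r_1(\alpha)=\log_2(1+\alpha P H_1),\qquad r_2(\alpha)=\log_2\Big(1+\frac{PH_2(1-\alpha)}{\alpha H_2 P+1}\Big).$$ Then the maximum of $\min\{r_1(\alpha),r_2(\alpha)\}$ over $\alpha\in[0,1]$ is attained at $$\alpha^{\star}=\frac{2H_2}{\sqrt{(H_1+H_2)^2+4H_1H_2^2P}+(H_1+H_2)}.$$
   Context: Two-user downlink NOMA: a base station with total transmit power $P$ sends the superposition $\sqrt{\alpha P}s_1+\sqrt{(1-\alpha)P}s_2$, $H_i=|h_i|^2$ is the channel gain to Receiver $i$, and the noise has unit variance. When $H_1\ge H_2$, Receiver 2 decodes $s_2$ treating $s_1$ as noise (rate $r_2(\alpha)$), and Receiver 1 removes $s_2$ by successive interference cancellation and then decodes $s_1$ (rate $r_1(\alpha)$). *)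

From Stdlib Require Import Reals.
Open Scope R_scope.

Definition log2 (x : R) : R := ln x / ln 2.

(* rate of Receiver 1 (after SIC) *)
Definition r1 (P H1 alpha : R) : R := log2 (1 + alpha * P * H1).

(* rate of Receiver 2 (treating s1 as noise) *)
Definition r2 (P H2 alpha : R) : R :=
  log2 (1 + P * H2 * (1 - alpha) / (alpha * H2 * P + 1)).

Definition min_rate (P H1 H2 alpha : R) : R := Rmin (r1 P H1 alpha) (r2 P H2 alpha).

Definition alpha_star (P H1 H2 : R) : R :=
  2 * H2 / (sqrt ((H1 + H2) ^ 2 + 4 * H1 * H2 ^ 2 * P) + (H1 + H2)).

(** Since [1 + P H2 (1 - a) / (a H2 P + 1) = (1 + P H2) / (1 + a H2 P)], the rate
    [r1] is nondecreasing and [r2] nonincreasing in the power split [a], so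
    [min r1 r2] is maximal where the two curves cross. Clearing denominators,
    [r1 a = r2 a] means [(1 + a P H1) (1 + a P H2) = 1 + P H2], i.e. [a] is a root of
    [H1 H2 P a^2 + (H1 + H2) a - H2], and [alpha_star] is the nonnegative root of
    that quadratic, written in rationalised form. *)

From Stdlib Require Import Reals Lra.
Open Scope R_scope.

Lemma log2_le (x y : R) : 0 < x -> x <= y -> log2 x <= log2 y.
Proof.
  intros hx hxy. unfold log2, Rdiv.
  apply Rmult_le_compat_r.
  - pose proof ln_lt_2. left; apply Rinv_0_lt_compat; lra.
  - destruct hxy as [hlt | <-]; [left; apply ln_increasing |]; lra.
Qed.

Lemma Rmin_le_at_crossing (f g : R -> R) (a x : R) :
  (x <= a -> f x <= f a) -> (a <= x -> g x <= g a) -> f a = g a ->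
  Rmin (f x) (g x) <= Rmin (f a) (g a).
Proof.
  intros hf hg hfg. rewrite <- hfg, (Rmin_left (f a) (f a)) by lra.
  destruct (Rle_dec x a) as [hxa | hax].
  - apply Rle_trans with (f x); [apply Rmin_l | auto].
  - rewrite hfg. apply Rle_trans with (g x); [apply Rmin_r | apply hg; lra].
Qed.

Lemma rationalized_root_quadratic (A B C : R) :
  0 <= B ^ 2 + 4 * A * C -> 0 < sqrt (B ^ 2 + 4 * A * C) + B ->
  let x := 2 * C / (sqrt (B ^ 2 + 4 * A * C) + B) in
  A * x ^ 2 + B * x - C = 0.
Proof.
  intros hD hden x.
  pose proof (sqrt_sqrt _ hD) as hs.
  set (s := sqrt (B ^ 2 + 4 * A * C)) in *.
  replace (A * x ^ 2 + B * x - C)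
    with (C * (B ^ 2 + 4 * A * C - s * s) / (s + B) ^ 2)
    by (unfold x; field; lra).
  rewrite hs. unfold Rdiv. ring.
Qed.

Lemma r1_le (P H1 a b : R) :
  0 <= P -> 0 <= H1 -> 0 <= a -> a <= b -> r1 P H1 a <= r1 P H1 b.
Proof.
  intros hP hH1 ha hab.
  assert (0 <= P * H1) by nra.
  assert (0 <= a * P * H1) by (rewrite Rmult_assoc; nra).
  assert (a * P * H1 <= b * P * H1) by (rewrite !Rmult_assoc; nra).
  unfold r1. apply log2_le; lra.
Qed.

Lemma r2E (P H2 a : R) :
  0 <= P -> 0 <= H2 -> 0 <= a ->
  r2 P H2 a = log2 ((1 + P * H2) / (1 + a * H2 * P)).
Proof.
  intros hP hH2 ha. assert (0 <= a * H2 * P) by (apply Rmult_le_pos; nra).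
  unfold r2. f_equal. field. lra.
Qed.

Lemma r2_le (P H2 a b : R) :
  0 <= P -> 0 <= H2 -> 0 <= a -> a <= b -> r2 P H2 b <= r2 P H2 a.
Proof.
  intros hP hH2 ha hab.
  assert (hPH2 : 0 <= P * H2) by nra.
  assert (hab' : a * H2 * P <= b * H2 * P) by nra.
  rewrite !r2E by lra.
  apply log2_le; [apply Rdiv_lt_0_compat; nra |].
  unfold Rdiv. apply Rmult_le_compat_l; [lra |].
  apply Rinv_le_contravar; nra.
Qed.

Lemma r1_eq_r2 (P H1 H2 a : R) :
  0 <= P -> 0 <= H2 -> 0 <= a ->
  H1 * H2 * P * a ^ 2 + (H1 + H2) * a - H2 = 0 ->
  r1 P H1 a = r2 P H2 a.
Proof.
  intros hP hH2 ha hroot. assert (0 <= a * H2 * P) by (apply Rmult_le_pos; nra).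
  rewrite r2E by lra. unfold r1. f_equal.
  apply (Rmult_eq_reg_r (1 + a * H2 * P)); [| lra].
  replace ((1 + P * H2) / (1 + a * H2 * P) * (1 + a * H2 * P)) with (1 + P * H2)
    by (field; lra).
  transitivity (1 + P * H2 + P * (H1 * H2 * P * a ^ 2 + (H1 + H2) * a - H2)); [ring |].
  rewrite hroot. ring.
Qed.

Section AlphaStar.

Variables P H1 H2 : R.
Hypotheses (hP : 0 <= P) (hH1 : 0 < H1) (hH2 : 0 <= H2).

Let discr := (H1 + H2) ^ 2 + 4 * H1 * H2 ^ 2 * P.

Lemma sqrt_discr_ge : H1 + H2 <= sqrt discr.
Proof.
  rewrite <- (sqrt_pow2 (H1 + H2)) by lra.
  apply sqrt_le_1_alt. unfold discr.
  assert (0 <= H1 * H2 ^ 2 * P) by (apply Rmult_le_pos; nra). lra.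
Qed.

Lemma alpha_star_bounds : 0 <= alpha_star P H1 H2 <= 1.
Proof.
  pose proof sqrt_discr_ge as hs.
  unfold alpha_star. fold discr.
  split.
  - unfold Rdiv. apply Rmult_le_pos; [lra | left; apply Rinv_0_lt_compat; lra].
  - apply Rmult_le_reg_r with (sqrt discr + (H1 + H2)); [lra |].
    unfold Rdiv. rewrite Rmult_assoc, Rinv_l by lra. lra.
Qed.

Lemma alpha_star_root :
  H1 * H2 * P * alpha_star P H1 H2 ^ 2 + (H1 + H2) * alpha_star P H1 H2 - H2 = 0.
Proof.
  pose proof sqrt_discr_ge as hs.
  replace discr with ((H1 + H2) ^ 2 + 4 * (H1 * H2 * P) * H2) in hs by (unfold discr; ring).
  unfold alpha_star.
  replace (4 * H1 * H2 ^ 2 * P) with (4 * (H1 * H2 * P) * H2) by ring.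
  apply rationalized_root_quadratic; [| lra].
  assert (0 <= H1 * H2 * P) by (apply Rmult_le_pos; nra). nra.
Qed.

End AlphaStar.

Theorem theorem1 (P H1 H2 : R) :
  0 < P -> 0 <= H2 -> H2 <= H1 -> 0 < H1 ->
  0 <= alpha_star P H1 H2 <= 1 /\
  (forall alpha : R, 0 <= alpha <= 1 ->
     min_rate P H1 H2 alpha <= min_rate P H1 H2 (alpha_star P H1 H2)).
Proof.
  (* [H2 <= H1] only fixes the decoding order; the optimisation does not use it. *)
  intros hP hH2 _ hH1.
  assert (hP0 : 0 <= P) by lra.
  pose proof (alpha_star_bounds P H1 H2 hP0 hH1 hH2) as hbounds.
  split; [exact hbounds |].
  intros alpha halpha. unfold min_rate.
  apply Rmin_le_at_crossing.
  - intros; apply r1_le; lra.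
  - intros; apply r2_le; lra.
  - apply r1_eq_r2; [lra | lra | lra |].
    exact (alpha_star_root P H1 H2 hP0 hH1 hH2).
Qed.
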